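(* Let $X=X_1\cdots X_n$ with independent $X_i\sim\mathrm{Bernoulli}(p_i)$, $p=(p_1,\dots,p_n)\in[0,1]^n$, and let $Y$ be the output of a deletion channel (deletion probability $\delta$) with input $X$. Let $y=y_1\cdots y_m$ be an observed trace with $\Pr(Y=y)>0$. Then for every $i\in\{1,\dots,n\}$, $$\Pr(X_i=1\mid Y=y)=\frac{p_i}{\mathbf F(p,y)}\left(\mathbf F(p_{[n]\setminus\{i\}},y)+\sum_{k:\,y_k=1}\mathbf F(p_{[1:i-1]},y_{[1:k-1]})\,\mathbf F(p_{[i+1:n]},y_{[k+1:m]})\right).$$
   Context: The deletion channel with deletion probability $\delta$ deletes each input symbol independently with probability $\delta$ and outputs the subsequence of undeleted symbols. For integers $a,b$, $[a:b]=\{a,\dots,b\}$ if $b\ge a$ and $\emptyset$ otherwise; $[n]=[1:n]$; $p_T$ denotes the subvector of $p$ indexed by $T$ and $y_T$ the corresponding subsequence of $y$ (empty when $T=\emptyset$). The relaxed binomial coefficient $\mathbf F:[0,1]^{n'}\times\{0,1\}^{m'}\to\mathbb R$ is: if $1\le m'\le n'$, $\mathbf F(q,v)=\sum_{S\subseteq[n'],|S|=m'}\prod_{j=1}^{m'} q_{S_j}^{v_j}(1-q_{S_j})^{1-v_j}$ with $S_1<\dots<S_{m'}$ the elements of $S$; if $m'=0\le n'$, $\mathbf F(q,v)=1$; otherwise $\mathbf F(q,v)=0$. *)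

From HB Require Import structures.
From mathcomp Require Import all_boot all_order all_algebra.
Set Implicit Arguments. Unset Strict Implicit. Unset Printing Implicit Defensive.
Import Order.TTheory GRing.Theory Num.Theory.
Local Open Scope ring_scope.

(* Relaxed binomial coefficient F(q, v), q : seq R (length n'), v : seq bool
   (length m').  Indices are 0-based; S_1 < ... < S_m' are the elements of S
   listed increasingly. *)
Definition relaxed_binom {R : ringType} (q : seq R) (v : seq bool) : R :=
  if size v == 0%N then 1
  else if (size v <= size q)%N then
    \sum_(S : {set 'I_(size q)} | #|S| == size v)
      \prod_(j < size v)
        (let s := nth 0%N (sort leq [seq val t | t <- enum S]) j in
         if nth false v j then q`_s else 1 - q`_s)
  else 0.

Definition prX {R : ringType} (n : nat) (p : 'I_n -> R) (x : {ffun 'I_n -> bool}) : R :=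
  \prod_(i < n) (if x i then p i else 1 - p i).

(* Output of the deletion channel when the set K of positions is kept
   (the others deleted): the subsequence of x indexed by K, in order. *)
Definition kept (n : nat) (x : {ffun 'I_n -> bool}) (K : {set 'I_n}) : seq bool :=
  [seq x j | j <- enum K].

Definition del_channel {R : ringType} (n : nat) (d : R) (x : {ffun 'I_n -> bool})
    (y : seq bool) : R :=
  \sum_(K : {set 'I_n} | kept x K == y) (1 - d) ^+ #|K| * d ^+ (n - #|K|).

Definition prXY {R : ringType} (n : nat) (p : 'I_n -> R) (d : R)
    (x : {ffun 'I_n -> bool}) (y : seq bool) : R :=
  prX p x * del_channel d x y.

Definition prY {R : ringType} (n : nat) (p : 'I_n -> R) (d : R) (y : seq bool) : R :=
  \sum_(x : {ffun 'I_n -> bool}) prXY p d x y.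

Definition prXi1_given_Y {R : fieldType} (n : nat) (p : 'I_n -> R) (d : R)
    (i : 'I_n) (y : seq bool) : R :=
  (\sum_(x : {ffun 'I_n -> bool} | x i) prXY p d x y) / prY p d y.

Definition subvec {R : Type} (n : nat) (p : 'I_n -> R) (T : pred 'I_n) : seq R :=
  [seq p j | j <- enum 'I_n & T j].

(* Given the set K of kept positions, the channel outputs y exactly when #|K| = m := size y
   and x_K = y, which happens with weight (1-d)^m d^(n-m).  Summing Pr(X = x) over the x with
   x_K = y integrates out the coordinates outside K and leaves Pr(X_K = y), a product of
   Bernoulli factors; and F(p_T, y) is exactly the sum of Pr(X_K = y) over the m-subsets K of T.
   Hence Pr(Y = y) = (1-d)^m d^(n-m) F(p, y).  In Pr(X_i = 1, Y = y) the sets K avoiding i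
   contribute p_i F(p_{[n]\{i}}, y), while a set K in which i is the k-th kept position
   contributes [y_k = 1] Pr(X_K = y); splitting such K at i into its parts before and after i
   turns their total into p_i F(p_{[1:i-1]}, y_{[1:k-1]}) F(p_{[i+1:n]}, y_{[k+1:m]}).  The
   factor (1-d)^m d^(n-m) cancels in the quotient. *)

From HB Require Import structures.
From mathcomp Require Import all_boot all_order all_algebra.
From mathcomp Require Import zify ring.
Set Implicit Arguments. Unset Strict Implicit. Unset Printing Implicit Defensive.
Import Order.TTheory GRing.Theory Num.Theory.
Local Open Scope ring_scope.

Lemma sorted_ltn_enum n (A : {pred 'I_n}) : sorted (relpre val ltn) (enum A).
Proof.
rewrite /enum_mem -enumT (sorted_filter (relpre_trans ltn_trans)) //.
by rewrite -sorted_map val_enum_ord iota_ltn_sorted.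
Qed.

Lemma enum_eq_sorted n (A : {pred 'I_n}) (s : seq 'I_n) :
  sorted (relpre val ltn) s -> s =i A -> enum A = s.
Proof.
move=> s_sorted sA.
apply: (irr_sorted_eq (relpre_trans ltn_trans) _ (sorted_ltn_enum A) s_sorted).
  by move=> t /=; rewrite ltnn.
by move=> t; rewrite mem_enum sA.
Qed.

Lemma enum_imset_incr m n (f : 'I_m -> 'I_n) (S : {set 'I_m}) :
  {homo f : a b / (a < b)%N} -> enum (f @: S) = map f (enum S).
Proof.
move=> f_incr; apply: enum_eq_sorted; first exact: homo_sorted (sorted_ltn_enum S).
by move=> k; apply/mapP/imsetP => -[t tS ->]; exists t; rewrite ?mem_enum in tS *.
Qed.

Lemma zip_mapl (A B C : Type) (f : A -> B) (s : seq A) (t : seq C) :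
  zip (map f s) t = [seq (f ac.1, ac.2) | ac <- zip s t].
Proof. by elim: s t => [|a s IH] [|c t] //=; rewrite IH. Qed.

Lemma prod_nth_zip (R : nzRingType) (F : nat -> bool -> R) (s : seq nat) (v : seq bool) :
  size s = size v ->
  \prod_(j < size v) F (nth 0%N s j) (nth false v j) = \prod_(jb <- zip s v) F jb.1 jb.2.
Proof.
elim: v s => [|b v IH] [|a s] //=; first by rewrite big_ord0 big_nil.
by move=> [size_sv]; rewrite big_ord_recl big_cons IH.
Qed.

Lemma map_nth_index (T : eqType) (U : Type) (s : seq T) (v : seq U) (x0 : U) :
  uniq s -> size v = size s -> [seq nth x0 v (index t s) | t <- s] = v.
Proof.
elim: s v => [|a s IH] [|b v] //= /andP[a_notin_s s_uniq] [size_vs].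
rewrite eqxx -[in RHS](IH v s_uniq size_vs); congr (_ :: _).
by apply/eq_in_map => t t_in_s /=; case: eqP => // t_eq_a; rewrite t_eq_a t_in_s in a_notin_s.
Qed.

Definition bern (R : nzRingType) (a : R) (b : bool) : R := if b then a else 1 - a.

(* Pr(X_K = v), K read in increasing order; meaningful only when #|K| = size v (zip truncates). *)
Definition prXK (R : nzRingType) n (p : 'I_n -> R) (K : {set 'I_n}) (v : seq bool) : R :=
  \prod_(jb <- zip (enum K) v) bern (p jb.1) jb.2.

Lemma relaxed_binomE (R : nzRingType) (q : seq R) (v : seq bool) :
  relaxed_binom q v =
  \sum_(S : {set 'I_(size q)} | #|S| == size v) prXK (fun j => q`_j) S v.
Proof.
rewrite /relaxed_binom; case: eqP => [/size0nil-> | v_neq0].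
  rewrite (big_pred1 set0) => [|S]; last by rewrite cards_eq0.
  by rewrite /prXK enum_set0 big_nil.
case: leqP => [v_le_q | q_lt_v]; last first.
  apply/esym/big_pred0 => S; apply/negbTE; rewrite neq_ltn.
  by rewrite (leq_ltn_trans _ q_lt_v) // -[X in (_ <= X)%N]card_ord max_card.
apply: eq_bigr => S /eqP cardS.
have sorted_S : sorted leq [seq val t | t <- enum S].
  rewrite sorted_map; apply: sub_sorted (sorted_ltn_enum S) => a b; exact: ltnW.
rewrite (sorted_sort leq_trans sorted_S).
rewrite (prod_nth_zip (fun k b => bern q`_k b)); last by rewrite size_map -cardE.
by rewrite zip_mapl big_map.
Qed.

Lemma prXK_imset_incr (R : nzRingType) m n (p : 'I_n -> R) (f : 'I_m -> 'I_n)
    (S : {set 'I_m}) (v : seq bool) :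
  {homo f : a b / (a < b)%N} -> prXK p (f @: S) v = prXK (p \o f) S v.
Proof. by move=> f_incr; rewrite /prXK enum_imset_incr // zip_mapl big_map. Qed.

Lemma sum_prXK_incr (R : nzRingType) m n (p : 'I_n -> R) (f : 'I_m -> 'I_n) (v : seq bool) :
  injective f -> {homo f : a b / (a < b)%N} ->
  \sum_(S : {set 'I_m} | #|S| == size v) prXK (p \o f) S v =
  \sum_(K : {set 'I_n} | (K \subset codom f) && (#|K| == size v)) prXK p K v.
Proof.
move=> f_inj f_incr; rewrite (reindex (fun S : {set 'I_m} => f @: S)) /=; last first.
  exists (fun K : {set 'I_n} => f @^-1: K) => [S _ | K /andP[/subsetP K_f _]].
    by apply/setP => t; rewrite inE mem_imset.
  apply/setP => k; apply/imsetP/idP => [[t] | kK]; first by rewrite inE => ? ->.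
  by have /codomP[t kE] := K_f k kK; exists t; rewrite ?inE -kE.
apply: eq_big => [S | S _]; last by rewrite prXK_imset_incr.
rewrite card_imset // (_ : f @: S \subset codom f) //.
by apply/subsetP => _ /imsetP[t _ ->]; exact: codom_f.
Qed.

Lemma relaxed_binom_subvec (R : nzRingType) n (p : 'I_n -> R) (T : pred 'I_n)
    (v : seq bool) :
  relaxed_binom (subvec p T) v =
  \sum_(K : {set 'I_n} | (K \subset T) && (#|K| == size v)) prXK p K v.
Proof.
have subvecE : subvec p T = map p (enum T) by rewrite /subvec enumT.
have size_subvec : size (subvec p T) = #|T| by rewrite subvecE size_map cardE.
pose f t := enum_val (cast_ord size_subvec t).
have f_incr : {homo f : a b / (a < b)%N}.
  move=> a b ab; have x0 := f a; rewrite /f !(enum_val_nth x0).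
  by apply: (sorted_ltn_nth (relpre_trans ltn_trans)) => //;
    [exact: sorted_ltn_enum | rewrite inE -cardE ltn_ord ..].
have f_inj : injective f by move=> a b /enum_val_inj /cast_ord_inj.
have codom_f : codom f =i T.
  move=> k; apply/codomP/idP => [[t ->] | kT]; first exact: enum_valP.
  by exists (cast_ord (esym size_subvec) (enum_rank_in kT k)); rewrite /f cast_ordKV enum_rankK_in.
have q_f (t : 'I_(size (subvec p T))) : (subvec p T)`_t = p (f t).
  have x0 := f t; rewrite /f (enum_val_nth x0) -(nth_map x0 0) -?subvecE //.
  by rewrite -cardE ltn_ord.
rewrite relaxed_binomE (eq_bigr (fun S => prXK (p \o f) S v)) => [|S _].
  by rewrite sum_prXK_incr //; apply: eq_bigl => K; rewrite (eq_subset_r codom_f).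
by apply: eq_bigr => jb _; rewrite q_f.
Qed.

Definition trace_bit n (K : {set 'I_n}) (v : seq bool) (t : 'I_n) : bool :=
  nth false v (index t (enum K)).

Section Marginals.
Variables (R : comNzRingType) (n : nat) (p : 'I_n -> R).
Implicit Types (K : {set 'I_n}) (v : seq bool).

Lemma map_trace_bit K v : #|K| = size v -> [seq trace_bit K v t | t <- enum K] = v.
Proof. by move=> cardK; apply: map_nth_index; rewrite ?enum_uniq // -cardE. Qed.

Lemma kept_eqE (x : {ffun 'I_n -> bool}) K v : #|K| = size v ->
  (kept x K == v) = [forall (t | t \in K), x t == trace_bit K v t].
Proof.
move=> cardK; rewrite /kept -{1}(map_trace_bit cardK).
apply/eqP/forall_inP => [/eq_in_map x_eq t tK | x_eq]; first by rewrite x_eq ?mem_enum.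
by apply/eq_in_map => t; rewrite mem_enum => /x_eq/eqP.
Qed.

Lemma prXK_trace_bit K v : #|K| = size v ->
  prXK p K v = \prod_(t in K) bern (p t) (trace_bit K v t).
Proof.
move=> cardK; rewrite /prXK -{1}(map_trace_bit cardK) -{1}[enum K]map_id zip_map.
by rewrite big_map big_enum.
Qed.

Lemma sum_bern (a : R) : \sum_b bern a b = 1.
Proof. by rewrite big_bool /= addrC subrK. Qed.

Lemma sum_prX_kept_family (Q : 'I_n -> pred bool) K v : #|K| = size v ->
  \sum_(x in family Q | kept x K == v) prX p x =
  \prod_t (if t \in K then (Q t (trace_bit K v t))%:R * bern (p t) (trace_bit K v t)
           else \sum_(b | Q t b) bern (p t) b).
Proof.
move=> cardK; set g := trace_bit K v.
pose QK t : pred bool := if t \in K then (fun b => (b == g t) && Q t b) else Q t.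
rewrite (eq_bigl (fun x => x \in family QK)) => [|x]; last first.
  rewrite kept_eqE //; apply/andP/familyP => [[/familyP xQ /forall_inP x_eq] t | xQK].
    by rewrite /QK; case: ifP => tK; [apply/andP; split; [exact: x_eq | exact: xQ] | exact: xQ].
  split; first by apply/familyP => t; have := xQK t; rewrite /QK; case: ifP => // _ /andP[].
  by apply/forall_inP => t tK; have := xQK t; rewrite /QK tK => /andP[].
transitivity (\prod_t \sum_(b | QK t b) bern (p t) b); first by rewrite bigA_distr_big_dep.
apply: eq_bigr => t _; rewrite /QK; case: ifP => // _.
by rewrite big_mkcondr big_pred1_eq; case: (Q t _); rewrite ?mul1r ?mul0r.
Qed.

Lemma sum_prX_kept K v : #|K| = size v ->
  \sum_(x | kept x K == v) prX p x = prXK p K v.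
Proof.
move=> cardK; transitivity (\sum_(x in family (fun=> predT) | kept x K == v) prX p x).
  by apply: eq_bigl => x; rewrite (_ : x \in family _) //; apply/familyP.
rewrite sum_prX_kept_family // (prXK_trace_bit cardK) [RHS]big_mkcond.
by apply: eq_bigr => t _; case: ifP => _; rewrite ?mul1r ?sum_bern.
Qed.

Lemma sum_prX_kept_bit (i : 'I_n) K v : #|K| = size v ->
  \sum_(x : {ffun 'I_n -> bool} | x i && (kept x K == v)) prX p x =
  (if i \in K then (trace_bit K v i)%:R else p i) * prXK p K v.
Proof.
move=> cardK; pose Q t : pred bool := fun b => (t == i) ==> b.
transitivity (\sum_(x in family Q | kept x K == v) prX p x).
  apply: eq_bigl => x; congr andb; apply/idP/familyP => [xi t | /(_ i)].
    by apply/implyP => /eqP->.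
  by rewrite unfold_in /= eqxx.
rewrite sum_prX_kept_family // (prXK_trace_bit cardK) [in RHS]big_mkcond /=.
rewrite (bigD1 i) //= [in RHS](bigD1 i) //= mulrA /Q eqxx /=; congr (_ * _).
  by case: ifP => _; rewrite ?mulr1 // big_mkcond big_bool /= addr0.
apply: eq_bigr => t /negbTE t_neq_i; rewrite t_neq_i /=.
by case: ifP => _; rewrite ?mul1r ?sum_bern.
Qed.

Lemma sum_prXY (P : pred {ffun 'I_n -> bool}) (d : R) (y : seq bool) :
  \sum_(x | P x) prXY p d x y =
  (1 - d) ^+ size y * d ^+ (n - size y) *
    \sum_(K : {set 'I_n} | #|K| == size y) \sum_(x | P x && (kept x K == y)) prX p x.
Proof.
rewrite /prXY /del_channel; under eq_bigr => x _ do rewrite big_distrr /=.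
rewrite (exchange_big_dep xpredT) //= big_distrr /= big_mkcond [RHS]big_mkcond /=.
apply: eq_bigr => K _; rewrite -big_distrl /=; case: eqP => [cardK | cardK_neq].
  by rewrite cardK mulrC.
rewrite big_pred0 ?mul0r // => x; apply/negbTE/nandP; right; apply/eqP => kept_x.
by apply: cardK_neq; rewrite -kept_x /kept size_map cardE.
Qed.

End Marginals.

Section SplitAt.
Variables (n : nat) (i : 'I_n).
Implicit Types (K : {set 'I_n}).

Definition below K := [set t in K | (t < i)%N].
Definition above K := [set t in K | (i < t)%N].

Lemma enum_split K : i \in K -> enum K = enum (below K) ++ i :: enum (above K).
Proof.
move=> iK; have lt_trans := relpre_trans (f := @nat_of_ord n) ltn_trans.
apply: enum_eq_sorted.
  rewrite (sorted_pairwise lt_trans) pairwise_cat pairwise_cons.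
  rewrite -!(sorted_pairwise lt_trans) !sorted_ltn_enum !andbT.
  apply/andP; split; last by apply/allP => t; rewrite mem_enum inE => /andP[].
  apply/allrelP => a b; rewrite mem_enum inE => /andP[_ a_lt_i].
  rewrite in_cons mem_enum inE => /predU1P[-> // | /andP[_ i_lt_b]].
  exact: ltn_trans a_lt_i i_lt_b.
move=> t; rewrite mem_cat in_cons !mem_enum !inE.
have [t_lt_i | i_lt_t | /val_inj ->] := ltngtP t i; rewrite ?andbT ?andbF ?orbF ?eqxx //.
  by rewrite -val_eqE /= ltn_eqF ?orbF.
by rewrite -val_eqE /= gtn_eqF.
Qed.

Lemma index_split K : i \in K -> index i (enum K) = #|below K|.
Proof.
move=> iK; rewrite enum_split // index_cat mem_enum inE ltnn andbF /= eqxx.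
by rewrite addn0 cardE.
Qed.

Lemma card_split K : i \in K -> #|K| = (#|below K| + #|above K|).+1.
Proof. by move=> iK; rewrite !cardE (enum_split iK) size_cat /= addnS. Qed.

Lemma setU1_below_above K : i \in K -> i |: (below K :|: above K) = K.
Proof.
move=> iK; apply/setP => t; rewrite -[t \in K]mem_enum (enum_split iK).
by rewrite mem_cat in_cons !mem_enum !inE orbCA.
Qed.

Lemma below_above_setU1 (A B : {set 'I_n}) :
  A \subset (fun j : 'I_n => (j < i)%N) -> B \subset (fun j : 'I_n => (i < j)%N) ->
  (below (i |: (A :|: B)), above (i |: (A :|: B))) = (A, B).
Proof.
move=> A_lt B_gt; have lt_A t : t \in A -> (t < i)%N := subsetP A_lt t.
have gt_B t : t \in B -> (i < t)%N := subsetP B_gt t.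
congr pair; apply/setP => t; rewrite !inE; apply/idP/idP.
- case/andP => /or3P[/eqP-> | // | /gt_B i_lt_t] t_lt_i; first by rewrite ltnn in t_lt_i.
  by have := ltn_trans i_lt_t t_lt_i; rewrite ltnn.
- by move=> tA; rewrite tA orbT lt_A.
- case/andP => /or3P[/eqP-> | /lt_A t_lt_i | //] i_lt_t; first by rewrite ltnn in i_lt_t.
  by have := ltn_trans i_lt_t t_lt_i; rewrite ltnn.
- by move=> tB; rewrite tB !orbT gt_B.
Qed.

Lemma prXK_split (R : nzRingType) (p : 'I_n -> R) K (y : seq bool) :
  i \in K -> (#|below K| < size y)%N ->
  prXK p K y = prXK p (below K) (take #|below K| y) *
    (bern (p i) (nth false y #|below K|) * prXK p (above K) (drop #|below K|.+1 y)).
Proof.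
move=> iK lt_y; rewrite {1}/prXK (enum_split iK).
rewrite -[in zip _ y](cat_take_drop #|below K| y) (drop_nth false lt_y).
by rewrite zip_cat ?size_takel -?cardE 1?ltnW // big_cat big_cons.
Qed.

Variables (R : comNzRingType) (p : 'I_n -> R) (y : seq bool).

Lemma sum_prXK_card_below k : (k < size y)%N ->
  \sum_(K : {set 'I_n} | [&& i \in K, #|K| == size y & #|below K| == k]) prXK p K y =
  relaxed_binom (subvec p (fun j => (j < i)%N)) (take k y) *
    (bern (p i) (nth false y k) * relaxed_binom (subvec p (fun j => (i < j)%N)) (drop k.+1 y)).
Proof.
move=> lt_k; symmetry; rewrite !relaxed_binom_subvec big_distrl /=.
under eq_bigr do rewrite big_distrr /= big_distrr /=.
rewrite pair_big_dep /= (reindex_onto (fun K => (below K, above K))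
  (fun AB => i |: (AB.1 :|: AB.2))) /=; last first.
  by move=> [A B] /andP[/andP[A_lt _] /andP[B_gt _]]; apply: below_above_setU1.
apply/esym/eq_big => [K | K /and3P[iK _ /eqP below_k]]; last first.
  by rewrite (prXK_split p iK) below_k.
have sub_below : below K \subset (fun j : 'I_n => (j < i)%N).
  by apply/subsetP => t; rewrite inE => /andP[].
have sub_above : above K \subset (fun j : 'I_n => (i < j)%N).
  by apply/subsetP => t; rewrite inE => /andP[].
rewrite sub_below sub_above !andTb size_drop size_takel; last exact: ltnW.
have [iK | iK] := boolP (i \in K); last first.
  apply/esym/negbTE/nandP; right; apply: contra iK => /eqP <-; exact: setU11.
rewrite (setU1_below_above iK) eqxx andbT (card_split iK) andTb.
(* lia compares atoms syntactically; [set] merges the card terms up to conversion. *)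
set b := #|below K|; set a := #|above K|.
by apply/andP/andP => -[b_eq a_eq]; split; lia.
Qed.

Lemma sum_trace_bit_prXK :
  \sum_(K : {set 'I_n} | (#|K| == size y) && (i \in K)) (trace_bit K y i)%:R * prXK p K y =
  p i * \sum_(k < size y | nth false y k)
     relaxed_binom (subvec p (fun j => (j < i)%N)) (take k y) *
     relaxed_binom (subvec p (fun j => (i < j)%N)) (drop k.+1 y).
Proof.
rewrite big_distrr /= (eq_bigr (fun k : 'I_(size y) =>
  \sum_(K : {set 'I_n} | [&& i \in K, #|K| == size y & #|below K| == k]) prXK p K y))
  => [|k y_k].
  rewrite (exchange_big_dep xpredT) //= [LHS]big_mkcond; apply: eq_bigr => K _.
  have [iK | iK] := boolP (i \in K); last by rewrite andbF big_pred0 // => k; rewrite andbF.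
  have [cardK | cardK] := eqVneq #|K| (size y); last by rewrite big_pred0 // => k; rewrite andbF.
  have lt_below : (#|below K| < size y)%N by rewrite -cardK (card_split iK) ltnS leq_addr.
  under eq_bigl do rewrite !andTb eq_sym.
  rewrite (big_ord1_cond_eq _ (fun=> prXK p K y) (nth false y)) lt_below /trace_bit index_split //.
  by case: (nth false y _); rewrite ?mul1r ?mul0r.
by rewrite sum_prXK_card_below // y_k mulrCA.
Qed.

End SplitAt.

Section Posterior.
Variables (R : comNzRingType) (n : nat) (p : 'I_n -> R) (d : R) (y : seq bool).

Lemma prY_relaxed_binom :
  prY p d y = (1 - d) ^+ size y * d ^+ (n - size y) * relaxed_binom (subvec p predT) y.
Proof.
rewrite /prY (sum_prXY p xpredT) relaxed_binom_subvec; congr (_ * _).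
by apply: eq_big => [K | K /eqP cardK]; [rewrite subset_predT | exact: sum_prX_kept].
Qed.

Lemma sum_prXY_bit (i : 'I_n) :
  \sum_(x : {ffun 'I_n -> bool} | x i) prXY p d x y =
  (1 - d) ^+ size y * d ^+ (n - size y) *
    (p i * relaxed_binom (subvec p (fun j => j != i)) y +
     \sum_(K : {set 'I_n} | (#|K| == size y) && (i \in K)) (trace_bit K y i)%:R * prXK p K y).
Proof.
rewrite (sum_prXY p (fun x => x i)) relaxed_binom_subvec; congr (_ * _).
rewrite big_distrr (bigID (fun K : {set 'I_n} => i \in K)) addrC /=; congr (_ + _).
  by apply: eq_bigr => K /andP[/eqP cardK iK]; rewrite sum_prX_kept_bit // iK.
apply: eq_big => [K | K /andP[/eqP cardK /negbTE iK]]; last first.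
  by rewrite sum_prX_kept_bit // iK.
rewrite andbC; congr andb; apply/idP/subsetP => [iK t tK | K_neq_i].
  by rewrite unfold_in /=; apply: contraNneq iK => <-.
by apply/negP => /K_neq_i; rewrite unfold_in /= eqxx.
Qed.

End Posterior.

Unset Implicit Arguments. Set Strict Implicit. Set Printing Implicit Defensive.

Theorem theorem6 (R : realFieldType) (n : nat) (p : 'I_n -> R) (d : R)
    (y : seq bool) (i : 'I_n) :
  (forall j, 0 <= p j <= 1) -> 0 <= d <= 1 ->
  0 < prY p d y ->
  prXi1_given_Y p d i y =
    p i / relaxed_binom (subvec p predT) y *
      (relaxed_binom (subvec p (fun j => j != i)) y +
       \sum_(k < size y | nth false y k)
          relaxed_binom (subvec p (fun j => (j < i)%N)) (take k y) *
          relaxed_binom (subvec p (fun j => (i < j)%N)) (drop k.+1 y)).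
Proof.
move=> _ _ prY_gt0.
have := lt0r_neq0 prY_gt0; rewrite prY_relaxed_binom !mulf_eq0 !negb_or.
case/andP=> /andP[d1_neq0 d_neq0] F_neq0.
rewrite /prXi1_given_Y sum_prXY_bit sum_trace_bit_prXK prY_relaxed_binom.
by field; rewrite F_neq0 d_neq0 d1_neq0.
Qed.
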